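(* Let $R$ be a Noetherian ring, let $P\in\operatorname{Spec}(R)$, and let $f:R\to R_P$ be the localization map. Let $\mathcal P(P)$ be the set of $P$-primary ideals of $R$, regarded as a subspace of $\mathcal I^\bullet(R)$ with the constructible topology, and let $\mathcal P(P)_\infty$ be the set of ideals of $R$ that are intersections of nonempty families of $P$-primary ideals. Then $$\mathcal P(P)_\infty=\mathrm{Cl}^\mathrm{cons}(\mathcal P(P))=f^\sharp(\mathcal I^\bullet(R_P)),$$ where $f^\sharp(J):=f^{-1}(J)$. In particular, if $R$ is local with maximal ideal $\mathfrak m$, then $\mathcal P(\mathfrak m)$ is dense in $\mathcal I^\bullet(R)$ with respect to the constructible topology.
   Context: For a ring $A$, $\mathcal I(A)$ is the set of ideals of $A$ and $\mathcal I^\bullet(A)$ the set of proper ideals. $\mathcal I(A)$ carries the Zariski topology with basis of open sets $\mathcal B(x_1,\ldots,x_n):=\{I\in\mathcal I(A)\mid x_1,\ldots,x_n\in I\}$; it is a spectral space. The constructible topology is the coarsest topology in which all open quasi-compact subsets of $\mathcal I(A)$ are clopen; $\mathrm{Cl}^\mathrm{cons}$ denotes closure in it, and $\mathcal I^\bullet(A)$ carries the subspace topology. *)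

From mathcomp Require Import all_boot all_order all_algebra.
Set Implicit Arguments. Unset Strict Implicit. Unset Printing Implicit Defensive.
Import GRing.Theory.
Local Open Scope ring_scope.

Definition is_ideal (R : comNzRingType) (I : R -> Prop) : Prop :=
  [/\ I 0, (forall x y, I x -> I y -> I (x + y)) & (forall a x, I x -> I (a * x))].

Record ideal (R : comNzRingType) := Ideal { ival : R -> Prop; ivalP : is_ideal ival }.

(** proper ideals: the elements of I^bullet(A) *)
Definition is_proper_ideal (R : comNzRingType) (I : ideal R) : Prop := ~ ival I 1.

Definition is_prime_ideal (R : comNzRingType) (P : ideal R) : Prop :=
  is_proper_ideal P /\ (forall x y, ival P (x * y) -> ival P x \/ ival P y).

Definition is_maximal_ideal (R : comNzRingType) (M : ideal R) : Prop :=
  is_proper_ideal M /\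
  (forall J : ideal R, is_proper_ideal J -> (forall x, ival M x -> ival J x) ->
     forall x, ival J x -> ival M x).

Definition local_with_max (R : comNzRingType) (m : ideal R) : Prop :=
  is_maximal_ideal m /\
  (forall J : ideal R, is_maximal_ideal J -> forall x, ival J x <-> ival m x).

Definition noetherian (R : comNzRingType) : Prop :=
  forall I : nat -> ideal R, (forall n x, ival (I n) x -> ival (I n.+1) x) ->
  exists N, forall n, (N <= n)%N -> forall x, ival (I n) x <-> ival (I N) x.

Definition primary_ideal (R : comNzRingType) (Q : ideal R) : Prop :=
  is_proper_ideal Q /\
  (forall x y, ival Q (x * y) -> ival Q x \/ exists n, ival Q (y ^+ n)).

Definition P_primary (R : comNzRingType) (P Q : ideal R) : Prop :=
  primary_ideal Q /\ (forall x, (exists n, ival Q (x ^+ n)) <-> ival P x).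

Definition primaries (R : comNzRingType) (P : ideal R) : ideal R -> Prop :=
  fun Q => P_primary P Q.

Definition primaries_infty (R : comNzRingType) (P : ideal R) : ideal R -> Prop :=
  fun I => exists C : ideal R -> Prop,
    (exists Q, C Q) /\ (forall Q, C Q -> P_primary P Q) /\
    (forall x, ival I x <-> forall Q, C Q -> ival Q x).

(** f is a localization map R -> S at the prime P (i.e. S = R_P):
    the standard characterization (Atiyah--Macdonald, Prop. 3.1). *)
Definition is_localization_at (R : comNzRingType) (S : comUnitRingType)
    (P : ideal R) (f : {rmorphism R -> S}) : Prop :=
  [/\ (forall s, ~ ival P s -> f s \is a GRing.unit),
      (forall y : S, exists r s, ~ ival P s /\ y = f r / f s) &
      (forall r, f r = 0 -> exists s, ~ ival P s /\ s * r = 0)].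

Definition contractions (R : comNzRingType) (S : comUnitRingType)
    (f : {rmorphism R -> S}) : ideal R -> Prop :=
  fun I => exists J : ideal S, is_proper_ideal J /\ (forall x, ival I x <-> ival J (f x)).

(** Zariski topology on I(A): basis B(x_1,...,x_n) *)
Definition zbasic (R : comNzRingType) (s : seq R) : ideal R -> Prop :=
  fun I => forall x, x \in s -> ival I x.

Definition zopen (R : comNzRingType) (U : ideal R -> Prop) : Prop :=
  forall I, U I -> exists s, zbasic s I /\ (forall J, zbasic s J -> U J).

Definition quasi_compact (R : comNzRingType) (U : ideal R -> Prop) : Prop :=
  forall C : (ideal R -> Prop) -> Prop,
    (forall V, C V -> zopen V) ->
    (forall I, U I -> exists V, C V /\ V I) ->
    exists (n : nat) (V : nat -> ideal R -> Prop),
      (forall i, (i < n)%N -> C (V i)) /\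
      (forall I, U I -> exists i, (i < n)%N /\ V i I).

(** constructible topology: the topology generated by the open quasi-compact
    sets and their complements (the coarsest one making them clopen) *)
Definition cons_subbasic (R : comNzRingType) (W : ideal R -> Prop) : Prop :=
  exists U, zopen U /\ quasi_compact U /\
    ((forall I, W I <-> U I) \/ (forall I, W I <-> ~ U I)).

Definition cons_open (R : comNzRingType) (W : ideal R -> Prop) : Prop :=
  forall I, W I -> exists (n : nat) (S : nat -> ideal R -> Prop),
    (forall i, (i < n)%N -> cons_subbasic (S i) /\ S i I) /\
    (forall J, (forall i, (i < n)%N -> S i J) -> W J).

Definition cl_cons (R : comNzRingType) (A : ideal R -> Prop) : ideal R -> Prop :=
  fun I => forall W, cons_open W -> W I -> exists J, W J /\ A J.

(** closure in the subspace I^bullet(A) of a subset A of I^bullet(A) *)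
Definition cl_cons_proper (R : comNzRingType) (A : ideal R -> Prop) : ideal R -> Prop :=
  fun I => is_proper_ideal I /\ cl_cons A I.

(* The three sets are compared through two properties of a proper ideal I:
   being separated by P-primary ideals (each x outside I lies outside some
   P-primary Q containing I) and being P-saturated (s x in I with s outside P
   forces x in I).  Separated ideals are exactly the members of P(P)_oo.  They
   lie in the constructible closure of P(P) because every constructible
   neighbourhood of I contains a set {K >= I | K meets no element of s} with
   s a finite subset of R \ I, and finitely many elements outside I are
   avoided by a finite intersection of P-primary ideals.  Points of the
   closure are P-saturated (test them on the constructible open set
   {K | s x in K, x notin K}), and P-saturated proper ideals are contractions
   of their extensions to R_P.  Finally contractions are separated: in the
   Noetherian ring R_P an ideal Q maximal among those containing J and
   avoiding y is primary, and every element p of the Jacobson radical, which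
   contains P R_P, has a power in Q because the chain (Q + R y) : p^n
   stabilises; such a Q contracts to a P-primary ideal of R.  A Noetherian
   local ring is its own localisation at m, so the same argument applied to
   the identity map gives the density statement. *)

From mathcomp Require Import all_boot all_order all_algebra.
From mathcomp Require Import ring.
From Stdlib Require Import Classical ClassicalEpsilon.
Set Implicit Arguments. Unset Strict Implicit. Unset Printing Implicit Defensive.
Import GRing.Theory.
Local Open Scope ring_scope.

Local Notation "I `<=` J" := (forall x, ival I x -> ival J x)
  (at level 70, no associativity).

Section IdealFacts.
Variables (R : comNzRingType) (I : ideal R).

Lemma ideal0 : ival I 0.
Proof. by case: (ivalP I). Qed.

Lemma idealD x y : ival I x -> ival I y -> ival I (x + y).
Proof. by case: (ivalP I) => _ D _; apply: D. Qed.

Lemma idealMl a x : ival I x -> ival I (a * x).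
Proof. by case: (ivalP I) => _ _ M; apply: M. Qed.

Lemma idealMr a x : ival I x -> ival I (x * a).
Proof. by rewrite mulrC; apply: idealMl. Qed.

Lemma idealB x y : ival I x -> ival I y -> ival I (x - y).
Proof. by move=> Ix Iy; apply: idealD => //; rewrite -mulN1r; apply: idealMl. Qed.

Lemma idealX_leq x m n : (m <= n)%N -> ival I (x ^+ m) -> ival I (x ^+ n).
Proof. by move=> /subnK <- Ixm; rewrite exprD; apply: idealMl. Qed.

Lemma ideal1 x : ival I 1 -> ival I x.
Proof. by rewrite -(mulr1 x); apply: idealMl. Qed.

Lemma ideal_unit u v : ival I u -> u * v = 1 -> ival I 1.
Proof. by move=> Iu <-; apply: idealMr. Qed.

End IdealFacts.

Section IdealConstructions.
Variable R : comNzRingType.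

Fact add_principal_is_ideal (K : ideal R) (a : R) :
  is_ideal (fun z => exists k r, ival K k /\ z = k + r * a).
Proof.
split.
- by exists 0, 0; rewrite add0r mul0r; split => //; apply: ideal0.
- move=> _ _ [k [r [Kk ->]]] [k' [r' [Kk' ->]]].
  by exists (k + k'), (r + r'); split; [apply: idealD | ring].
- move=> b _ [k [r [Kk ->]]].
  by exists (b * k), (b * r); split; [apply: idealMl | ring].
Qed.
Definition add_principal K a := Ideal (add_principal_is_ideal K a).

Fact colon_is_ideal (K : ideal R) (b : R) : is_ideal (fun z => ival K (b * z)).
Proof.
split.
- by rewrite mulr0; apply: ideal0.
- by move=> x y Kx Ky; rewrite mulrDr; apply: idealD.
- by move=> a x Kx; rewrite mulrCA; apply: idealMl.
Qed.
Definition colon K b := Ideal (colon_is_ideal K b).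

Fact cap_is_ideal (K L : ideal R) : is_ideal (fun z => ival K z /\ ival L z).
Proof.
split.
- by split; apply: ideal0.
- by move=> x y [Kx Lx] [Ky Ly]; split; apply: idealD.
- by move=> a x [Kx Lx]; split; apply: idealMl.
Qed.
Definition cap K L := Ideal (cap_is_ideal K L).

Fact principal_is_ideal (a : R) : is_ideal (fun z => exists r, z = r * a).
Proof.
split.
- by exists 0; rewrite mul0r.
- by move=> _ _ [r ->] [s ->]; exists (r + s); rewrite mulrDl.
- by move=> b _ [r ->]; exists (b * r); rewrite mulrA.
Qed.
Definition principal a := Ideal (principal_is_ideal a).

End IdealConstructions.

Fact comap_is_ideal (R T : comNzRingType) (g : {rmorphism R -> T}) (J : ideal T) :
  is_ideal (fun z => ival J (g z)).
Proof.
split.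
- by rewrite rmorph0; apply: ideal0.
- by move=> x y Jx Jy; rewrite rmorphD; apply: idealD.
- by move=> a x Jx; rewrite rmorphM; apply: idealMl.
Qed.
Definition comap (R T : comNzRingType) (g : {rmorphism R -> T}) (J : ideal T) :=
  Ideal (comap_is_ideal g J).

Section Noetherian.
Variables (R : comNzRingType) (hN : noetherian R).

Lemma noetherian_maximal (F : ideal R -> Prop) K0 : F K0 ->
  exists Q, F Q /\ forall K, F K -> Q `<=` K -> K `<=` Q.
Proof.
move=> FK0; apply: NNPP => noMax.
(* Otherwise iterating a choice of strictly larger members of F from K0
   yields a strictly ascending chain. *)
have grow Q : exists K, F Q -> [/\ F K, Q `<=` K & exists2 x, ival K x & ~ ival Q x].
  have [FQ|] := classic (F Q); last by exists Q.
  apply: NNPP => noK; apply: noMax; exists Q; split => // K FK QK x Kx.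
  by apply: NNPP => nQx; apply: noK; exists K => _; split => //; exists x.
have [g gP] := choice _ grow.
pose c n := iter n g K0.
have Fc n : F (c n) by elim: n => //= n IH; case: (gP _ IH).
have [N cN] := @hN c (fun n => let: And3 _ h _ := gP _ (Fc n) in h).
have [_ _ [x cx ncx]] := gP _ (Fc N).
by apply: ncx; apply/(cN N.+1 (leqnSn N)).
Qed.

Lemma noetherian_colon_pow (K : ideal R) (b : R) :
  exists N, forall x, ival K (b ^+ N.+1 * x) -> ival K (b ^+ N * x).
Proof.
have colonS n x : ival (colon K (b ^+ n)) x -> ival (colon K (b ^+ n.+1)) x.
  by rewrite /= exprS -mulrA; apply: idealMl.
have [N cN] := @hN (fun n => colon K (b ^+ n)) colonS.
by exists N => x; apply: (cN N.+1 (leqnSn N) x).1.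
Qed.

End Noetherian.

Definition in_jacobson (R : comNzRingType) (p : R) : Prop :=
  forall c, exists v, (1 - p * c) * v = 1.

Section MaximalAvoiding.
Variables (R : comNzRingType) (hN : noetherian R) (Q : ideal R) (y : R).
(* Q is maximal among the ideals not containing y. *)
Hypotheses (nQy : ~ ival Q y)
  (Q_max : forall a, ~ ival Q a -> exists k r, ival Q k /\ y = k + r * a).

Lemma max_avoiding_primary : primary_ideal Q.
Proof.
split; first by move=> /(ideal1 y).
move=> a b Qab; have [Qa|nQa] := classic (ival Q a); [by left | right].
have [N colonN] := noetherian_colon_pow hN Q b.
exists N; apply: NNPP => nQbN.
have [k [r [Qk ey]]] := Q_max nQbN.
have [k' [r' [Qk' ey']]] := Q_max nQa.
have Qby : ival Q (b * y).
  have -> : b * y = b * k' + r' * (a * b) by rewrite ey'; ring.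
  by apply: idealD; apply: idealMl.
have /colonN QbNr : ival Q (b ^+ N.+1 * r).
  have -> : b ^+ N.+1 * r = b * y - b * k by rewrite ey exprS; ring.
  by apply: idealB => //; apply: idealMl.
by apply: nQy; rewrite ey mulrC; apply: idealD.
Qed.

Lemma max_avoiding_jacobson p : in_jacobson p -> exists n, ival Q (p ^+ n).
Proof.
move=> pJ; apply: NNPP => noPow.
have [N colonN] := noetherian_colon_pow hN (add_principal Q y) p.
have [k [r [Qk ey]]] := Q_max (fun Qp => noPow (ex_intro _ N.+1 Qp)).
have [k' [r' [Qk' ey']]] : ival (add_principal Q y) (p ^+ N * r).
  apply: colonN; exists (- 1 * k), 1; split; first exact: idealMl.
  by rewrite ey; ring.
have [v hv] := pJ r'.
have Qy' : ival Q ((1 - p * r') * y).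
  have e3 : r * p ^+ N.+1 = p * (k' + r' * y) by rewrite -ey' exprS; ring.
  have -> : (1 - p * r') * y = k + p * k' by rewrite mulrBl mul1r {1}ey e3; ring.
  by apply: idealD => //; apply: idealMl.
apply: nQy; have -> : y = v * ((1 - p * r') * y) by rewrite mulrA (mulrC v) hv mul1r.
exact: idealMl.
Qed.

End MaximalAvoiding.

Lemma exists_primary_avoiding (R : comNzRingType) (J : ideal R) y :
  noetherian R -> ~ ival J y ->
  exists Q, [/\ J `<=` Q, ~ ival Q y, primary_ideal Q &
              forall p, in_jacobson p -> exists n, ival Q (p ^+ n)].
Proof.
move=> hN nJy.
have [Q [[JQ nQy] Qmax]] :=
  noetherian_maximal hN (F := fun K => J `<=` K /\ ~ ival K y)
    (conj (fun _ Jx => Jx) nJy).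
have Q_max a : ~ ival Q a -> exists k r, ival Q k /\ y = k + r * a.
  move=> nQa; apply: NNPP => ny; apply: nQa; apply: (Qmax (add_principal Q a)).
  - by split => [z /JQ Qz|//]; exists z, 0; rewrite mul0r addr0.
  - by move=> x Qx; exists x, 0; rewrite mul0r addr0.
  - by exists 0, 1; rewrite add0r mul1r; split => //; apply: ideal0.
exists Q; split => //.
- exact: (max_avoiding_primary hN nQy Q_max).
- exact: (max_avoiding_jacobson hN nQy Q_max).
Qed.

Section PrimarySeparation.
Variables (R : comNzRingType) (P : ideal R).

Lemma P_primary_cap Q1 Q2 : P_primary P Q1 -> P_primary P Q2 -> P_primary P (cap Q1 Q2).
Proof.
move=> [[pQ1 prQ1] radQ1] [[pQ2 prQ2] radQ2].
have capX x : ival P x -> exists n, ival (cap Q1 Q2) (x ^+ n).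
  move=> Px; have [n1 Q1x] := (radQ1 x).2 Px; have [n2 Q2x] := (radQ2 x).2 Px.
  exists (maxn n1 n2); split.
  - by apply: idealX_leq Q1x; rewrite leq_maxl.
  - by apply: idealX_leq Q2x; rewrite leq_maxr.
split; first split.
- by case.
- move=> x y [Q1xy Q2xy].
  have [Qx|nQx] := classic (ival Q1 x /\ ival Q2 x); [by left | right].
  apply: capX; have [Q1x|nQ1x] := classic (ival Q1 x).
  + by case: (prQ2 _ _ Q2xy) => [Q2x|/radQ2 //]; case: nQx.
  + by case: (prQ1 _ _ Q1xy) => [//|/radQ1].
- move=> x; split; last exact: capX.
  by case=> n [Q1x _]; apply/radQ1; exists n.
Qed.

Definition primary_separated (I : ideal R) : Prop :=
  forall x, ~ ival I x -> exists Q, [/\ P_primary P Q, I `<=` Q & ~ ival Q x].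

Lemma primaries_inftyP I :
  primaries_infty P I <-> is_proper_ideal I /\ primary_separated I.
Proof.
split.
- move=> [C [[Q0 CQ0] [CP eI]]]; split.
    by move=> /eI/(_ Q0 CQ0); case: (CP Q0 CQ0) => -[].
  move=> x nIx; apply: NNPP => noQ; apply: nIx; apply/eI => Q CQ.
  apply: NNPP => nQx; apply: noQ; exists Q; split => //; first exact: CP.
  by move=> z /eI; apply.
- move=> [pI sepI]; have [Q1 [Q1P IQ1 _]] := sepI 1 pI.
  exists (fun Q => P_primary P Q /\ I `<=` Q); split; first by exists Q1.
  split=> [Q [] //|x]; split=> [Ix Q [_ IQ]|IQx]; first exact: IQ.
  by apply: NNPP => /sepI [Q [QP IQ nQx]]; apply: nQx; apply: IQx.
Qed.

Lemma primary_separated_seq I : is_proper_ideal I -> primary_separated I ->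
  forall s : seq R, (forall x, x \in s -> ~ ival I x) ->
  exists Q, [/\ P_primary P Q, I `<=` Q & forall x, x \in s -> ~ ival Q x].
Proof.
move=> pI sepI; elim=> [|a s IH] sI.
  by have [Q [QP IQ _]] := sepI 1 pI; exists Q.
have sI' x : x \in s -> ~ ival I x by move=> xs; apply: sI; rewrite inE xs orbT.
have [Q1 [Q1P IQ1 sQ1]] := IH sI'.
have [Q2 [Q2P IQ2 nQ2a]] := sepI a (sI a (mem_head a s)).
exists (cap Q1 Q2); split; first exact: P_primary_cap.
- by move=> z Iz; split; [apply: IQ1 | apply: IQ2].
- by move=> x; rewrite inE => /orP [/eqP -> [] | /sQ1 nQ1x []].
Qed.

End PrimarySeparation.

Lemma seq_choice (T : eqType) (A : T -> Prop) (B : nat -> T -> Prop) n :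
  (forall i, (i < n)%N -> exists2 x, A x & B i x) ->
  exists s : seq T, (forall x, x \in s -> A x) /\
                    forall i, (i < n)%N -> exists2 x, x \in s & B i x.
Proof.
elim: n => [|n IH] AB; first by exists [::].
have [s [sA sB]] := IH (fun i lt_in => AB i (ltnW lt_in)).
have [x Ax Bx] := AB n (ltnSn n).
exists (x :: s); split=> [z|i].
- by rewrite inE => /orP [/eqP -> | /sA].
- rewrite ltnS leq_eqVlt => /orP [/eqP -> | /sB [z zs Bz]].
    by exists x; rewrite ?mem_head.
  by exists z; rewrite // inE zs orbT.
Qed.

Section ConstructibleTopology.
Variable R : comNzRingType.

Lemma zopen_up (U : ideal R -> Prop) I J : zopen U -> U I -> I `<=` J -> U J.
Proof. by move=> oU /oU [s [Is sU]] IJ; apply: sU => x /Is /IJ. Qed.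

Lemma zopen_zbasic (s : seq R) : zopen (zbasic s).
Proof. by move=> I Is; exists s. Qed.

Lemma zbasic1 (a : R) K : zbasic [:: a] K <-> ival K a.
Proof. by split=> [/(_ a (mem_head a [::]))|Ka x] //; rewrite inE => /eqP ->. Qed.

Lemma quasi_compact_zbasic1 (a : R) : quasi_compact (zbasic [:: a]).
Proof.
move=> C oC cover.
have Ra : zbasic [:: a] (principal a) by apply/zbasic1; exists 1; rewrite mul1r.
have [V [CV Va]] := cover _ Ra.
have [s [sa sV]] := oC V CV _ Va.
exists 1%N, (fun=> V); split=> // I /zbasic1 Ia; exists 0%N; split => //.
by apply: sV => x /sa [r ->]; apply: idealMl.
Qed.

Lemma cons_subbasic_mem (a : R) : cons_subbasic (fun K => ival K a).
Proof.
exists (zbasic [:: a]); split; [exact: zopen_zbasic | split; [exact: quasi_compact_zbasic1 |]].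
by left=> K; rewrite zbasic1.
Qed.

Lemma cons_subbasic_notmem (a : R) : cons_subbasic (fun K => ~ ival K a).
Proof.
exists (zbasic [:: a]); split; [exact: zopen_zbasic | split; [exact: quasi_compact_zbasic1 |]].
by right=> K; rewrite zbasic1.
Qed.

Lemma cons_open_subbasicI (W1 W2 : ideal R -> Prop) :
  cons_subbasic W1 -> cons_subbasic W2 -> cons_open (fun K => W1 K /\ W2 K).
Proof.
move=> W1s W2s K [W1K W2K]; exists 2%N, (fun i => if i == 0%N then W1 else W2).
split.
- by case=> [|[|i]] // _; split.
- by move=> J SJ; split; [apply: (SJ 0%N) | apply: (SJ 1%N)].
Qed.

Lemma qc_zopen_avoid (V : ideal R -> Prop) I : zopen V -> quasi_compact V -> ~ V I ->
  exists s : seq R, (forall x, x \in s -> ~ ival I x) /\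
                    (forall J, V J -> exists2 x, x \in s & ival J x).
Proof.
move=> oV qcV nVI.
pose C W := exists2 x, ~ ival I x & W = zbasic [:: x].
have [||n [Vf [CVf cover]]] := qcV C.
- by move=> W [x _ ->]; apply: zopen_zbasic.
- move=> J /oV [s [Js sV]].
  have [x xs nIx] : exists2 x, x \in s & ~ ival I x.
    apply: NNPP => noX; apply: nVI; apply: sV => x xs.
    by apply: NNPP => nIx; apply: noX; exists x.
  by exists (zbasic [:: x]); split; [exists x | apply/zbasic1; apply: Js].
have [s [sI sVf]] := seq_choice CVf.
exists s; split => // J /cover [i [lt_in VfJ]].
by have [x xs Vfx] := sVf i lt_in; exists x => //; apply/zbasic1; rewrite -Vfx.
Qed.

Definition avoid_nbhd (I : ideal R) (W : ideal R -> Prop) : Prop :=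
  exists s : seq R, (forall x, x \in s -> ~ ival I x) /\
    forall J, I `<=` J -> (forall x, x \in s -> ~ ival J x) -> W J.

Lemma avoid_nbhdI I W1 W2 : avoid_nbhd I W1 -> avoid_nbhd I W2 ->
  avoid_nbhd I (fun J => W1 J /\ W2 J).
Proof.
move=> [s1 [s1I s1W]] [s2 [s2I s2W]]; exists (s1 ++ s2); split.
- by move=> x; rewrite mem_cat => /orP [/s1I | /s2I].
- move=> J IJ s12J; split; [apply: s1W | apply: s2W] => // x xs;
    by apply: s12J; rewrite mem_cat xs ?orbT.
Qed.

Lemma avoid_nbhdS I (W1 W2 : ideal R -> Prop) :
  avoid_nbhd I W1 -> (forall J, W1 J -> W2 J) -> avoid_nbhd I W2.
Proof. by move=> [s [sI sW]] W12; exists s; split => // J IJ sJ; apply/W12/sW. Qed.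

Lemma cons_subbasic_avoid_nbhd I W : cons_subbasic W -> W I -> avoid_nbhd I W.
Proof.
move=> [U [oU [qcU [WU|WnU]]]] WI.
- exists [::]; split=> // J IJ _; apply/WU; apply: zopen_up oU _ IJ; exact/WU.
- have [s [sI sU]] := qc_zopen_avoid oU qcU ((WnU I).1 WI).
  by exists s; split=> // J IJ sJ; apply/WnU => /sU [x xs Jx]; apply: sJ xs Jx.
Qed.

Lemma cons_open_avoid_nbhd I W : cons_open W -> W I -> avoid_nbhd I W.
Proof.
move=> oW /oW [n [S [SI SW]]]; apply: avoid_nbhdS SW.
elim: n SI => [|n IH] SI; first by exists [::].
have [Sn SnI] := SI n (ltnSn n).
apply: avoid_nbhdS (avoid_nbhdI (IH _) (cons_subbasic_avoid_nbhd Sn SnI)) _.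
- by move=> i lt_in; apply: SI; apply: ltnW.
- by move=> J [SJ SnJ] i; rewrite ltnS leq_eqVlt => /orP [/eqP -> | /SJ].
Qed.

End ConstructibleTopology.

Lemma cl_cons_primaries_of_separated (R : comNzRingType) (P I : ideal R) :
  is_proper_ideal I -> primary_separated P I -> cl_cons (primaries P) I.
Proof.
move=> pI sepI W oW WI; have [s [sI sW]] := cons_open_avoid_nbhd oW WI.
have [Q [QP IQ sQ]] := primary_separated_seq pI sepI sI.
by exists Q; split => //; apply: sW.
Qed.

Definition P_saturated (R : comNzRingType) (P I : ideal R) : Prop :=
  forall s x, ~ ival P s -> ival I (s * x) -> ival I x.

Lemma cl_cons_primaries_saturated (R : comNzRingType) (P I : ideal R) :
  cl_cons (primaries P) I -> P_saturated P I.
Proof.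
move=> clI s x nPs Isx; apply: NNPP => nIx.
have oW := cons_open_subbasicI (cons_subbasic_mem (s * x)) (cons_subbasic_notmem x).
have [K [[Ksx nKx] [[_ prK] radK]]] := clI _ oW (conj Isx nIx).
by rewrite mulrC in Ksx; case: (prK _ _ Ksx) => // /radK /nPs.
Qed.

Section Contraction.
Variables (R T : comNzRingType) (P : ideal R) (g : {rmorphism R -> T}).
Hypotheses (g_unit : forall s, ~ ival P s -> exists v, g s * v = 1)
           (g_jacobson : forall a, ival P a -> in_jacobson (g a)).

Lemma P_primary_comap Q : primary_ideal Q ->
  (forall a, ival P a -> exists n, ival Q (g a ^+ n)) -> P_primary P (comap g Q).
Proof.
move=> [pQ prQ] radQ; split; first split.
- by rewrite /is_proper_ideal /= rmorph1.
- move=> a b; rewrite /= rmorphM => /prQ [Qa|[n Qbn]]; [by left | right].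
  by exists n; rewrite /= rmorphXn.
- move=> x; split=> [[n]|/radQ [n Qxn]]; last by exists n; rewrite /= rmorphXn.
  rewrite /= rmorphXn => Qxn; apply: NNPP => /g_unit [v gxv]; apply: pQ.
  by apply: (ideal_unit (v := v ^+ n) Qxn); rewrite -exprMn gxv expr1n.
Qed.

Lemma primary_separated_comap (J : ideal T) (I : ideal R) : noetherian T ->
  (forall x, ival I x <-> ival J (g x)) -> primary_separated P I.
Proof.
move=> hN IJ x nIx; have nJgx : ~ ival J (g x) by move/IJ.
have [Q [JQ nQgx primQ jacQ]] := exists_primary_avoiding hN nJgx.
exists (comap g Q); split => //.
- by apply: P_primary_comap primQ _ => a /g_jacobson /jacQ.
- by move=> z /IJ /JQ.
Qed.

End Contraction.

Section Localization.
Variables (R : comNzRingType) (P : ideal R) (S : comUnitRingType).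
Variables (f : {rmorphism R -> S}) (f_loc : is_localization_at P f).

Lemma localization_unit s : ~ ival P s -> exists v, f s * v = 1.
Proof. by case: f_loc => unit_f _ _ /unit_f fs_unit; exists (f s)^-1; rewrite mulrV. Qed.

Lemma noetherian_localization : noetherian R -> noetherian S.
Proof.
move=> hN J incrJ; case: f_loc => unit_f frac _.
have [N cN] := @hN (fun n => comap f (J n)) (fun n x => incrJ n (f x)).
exists N => n le_Nn y; split=> [Jny|JNy].
- have [r [t [nPt ey]]] := frac y; rewrite ey in Jny *.
  apply: idealMr; apply/(cN n le_Nn) => /=.
  by rewrite -(divrK (unit_f t nPt) (f r)); apply: idealMr.
- rewrite -(subnKC le_Nn); elim: (n - N)%N => [|k IH]; first by rewrite addn0.
  by rewrite addnS; apply: incrJ.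
Qed.

Lemma localization_in_jacobson a : ival P a -> in_jacobson (f a).
Proof.
move=> Pa c; case: f_loc => unit_f frac _.
have [r [t [nPt ->]]] := frac c.
have nPtar : ~ ival P (t - a * r).
  by move=> Ptar; apply: nPt; rewrite -(subrK (a * r) t); apply: idealD Ptar _; apply: idealMr.
exists (f t / f (t - a * r)).
have -> : 1 - f a * (f r / f t) = f (t - a * r) / f t.
  by rewrite rmorphB rmorphM mulrBl divrr ?unit_f // mulrA.
by rewrite mulrA divrK ?unit_f // divrr ?unit_f.
Qed.

Hypothesis P_prime : is_prime_ideal P.

Fact extension_is_ideal (I : ideal R) :
  is_ideal (fun y => exists t a, [/\ ~ ival P t, ival I a & y * f t = f a]).
Proof.
case: P_prime => pP prP; case: f_loc => unit_f frac _.
have nPM t u : ~ ival P t -> ~ ival P u -> ~ ival P (t * u) by move=> nPt nPu /prP [].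
split.
- by exists 1, 0; split => //; [apply: ideal0 | rewrite mul0r rmorph0].
- move=> y z [t [a [nPt Ia ey]]] [u [b [nPu Ib ez]]].
  exists (t * u), (a * u + b * t); split; first exact: nPM.
  + by apply: idealD; apply: idealMr.
  + by rewrite rmorphD !rmorphM -ey -ez; ring.
- move=> c y [t [a [nPt Ia ey]]]; have [r [w [nPw ->]]] := frac c.
  exists (t * w), (r * a); split; [exact: nPM | exact: idealMl |].
  have ec : f r / f w * f w = f r by rewrite divrK ?unit_f.
  by rewrite !rmorphM -ey -[in RHS]ec; ring.
Qed.
Definition extension I := Ideal (extension_is_ideal I).

Lemma contraction_of_saturated I : is_proper_ideal I -> P_saturated P I -> contractions f I.
Proof.
move=> pI satI; case: P_prime => pP prP; case: f_loc => _ _ ker_f.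
have IE x : ival I x <-> ival (extension I) (f x).
  split=> [Ix|[t [a [nPt Ia ext]]]]; first by exists 1, x; rewrite rmorph1 mulr1.
  have /ker_f [u [nPu eu]] : f (x * t - a) = 0 by rewrite rmorphB rmorphM ext subrr.
  apply: (satI (u * t)); first by move/prP => [].
  have -> : u * t * x = u * a by apply/eqP; rewrite -subr_eq0 -eu; apply/eqP; ring.
  exact: idealMl.
by exists (extension I); split => // ext1; apply: pI; apply/IE; rewrite rmorph1.
Qed.

End Localization.

Section LocalRing.
Variables (R : comNzRingType) (m : ideal R).

Lemma local_unit : noetherian R -> local_with_max m ->
  forall u, ~ ival m u -> exists v, u * v = 1.
Proof.
move=> hN [_ m_unique] u nmu; apply: NNPP => u_nonunit.
have nRu1 : ~ ival (principal u) 1.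
  by move=> [r e]; apply: u_nonunit; exists r; rewrite mulrC e.
have [M [[uM nM1] Mmax]] :=
  noetherian_maximal hN (F := fun L => principal u `<=` L /\ ~ ival L 1)
    (conj (fun _ Ru => Ru) nRu1).
have M_max : is_maximal_ideal M.
  by split => // J pJ MJ; apply: Mmax => //; split => // z /uM /MJ.
by apply: nmu; apply/(m_unique M M_max); apply: uM; exists 1; rewrite mul1r.
Qed.

Lemma in_jacobson_of_units : is_proper_ideal m ->
  (forall u, ~ ival m u -> exists v, u * v = 1) -> forall a, ival m a -> in_jacobson a.
Proof.
move=> pm m_unit a ma c; apply: m_unit => m1ac; apply: pm.
by rewrite -(subrK (a * c) 1); apply: idealD m1ac _; apply: idealMr.
Qed.

End LocalRing.

Theorem proposition5p3 :
  (forall (R : comNzRingType) (P : ideal R) (S : comUnitRingType)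
          (f : {rmorphism R -> S}),
     noetherian R -> is_prime_ideal P -> is_localization_at P f ->
     (forall I : ideal R, primaries_infty P I <-> cl_cons_proper (primaries P) I) /\
     (forall I : ideal R, cl_cons_proper (primaries P) I <-> contractions f I))
  /\
  (forall (R : comNzRingType) (m : ideal R),
     noetherian R -> local_with_max m ->
     forall I : ideal R, is_proper_ideal I -> cl_cons_proper (primaries m) I).
Proof.
split.
- move=> R P S f hN P_prime f_loc.
  have infty_of_contr I : contractions f I -> primaries_infty P I.
    move=> [J [pJ IJ]]; apply/primaries_inftyP; split; first by move/IJ; rewrite rmorph1.
    exact: (primary_separated_comap (localization_unit f_loc)
              (localization_in_jacobson f_loc) (noetherian_localization f_loc hN) IJ).
  have cl_of_infty I : primaries_infty P I -> cl_cons_proper (primaries P) I.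
    move/primaries_inftyP => [pI sepI]; split => //.
    exact: (cl_cons_primaries_of_separated pI sepI).
  have contr_of_cl I : cl_cons_proper (primaries P) I -> contractions f I.
    move=> [pI /cl_cons_primaries_saturated satI].
    exact: (contraction_of_saturated f_loc P_prime pI satI).
  split=> I; split.
  + exact: cl_of_infty.
  + by move/contr_of_cl/infty_of_contr.
  + exact: contr_of_cl.
  + by move/infty_of_contr/cl_of_infty.
- move=> R m hN m_local I pI; split => //.
  have m_unit := local_unit hN m_local.
  have [[pm _] _] := m_local.
  apply: cl_cons_primaries_of_separated pI _.
  exact: (primary_separated_comap (g := idfun) m_unit
            (in_jacobson_of_units pm m_unit) hN (fun x => iff_refl (ival I x))).
Qed.
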